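(* Let $M$ be a left-quotient of $\widetilde{\mathrm{SL}}_2$ with fundamental group $\pi$ presented as below, and let $\rho,\rho'\in\mathcal R(\pi,\widetilde{\mathrm{SL}}_2)$ satisfy $\mathrm{pr}\circ\rho=\mathrm{pr}\circ\rho'$. Then $\rho(h)=\rho'(h)$ and $\rho(q_j)=\rho'(q_j)$ for $j=1,\dots,n$.
   Context: $\mathrm{pr}\colon\widetilde{\mathrm{SL}}_2\to\mathrm{PSL}_2\mathbb R$ is the universal covering. $M$ has normalised Seifert invariants $\{g,b,(\alpha_1,\beta_1),\dots,(\alpha_n,\beta_n)\}$ with Euler number $e=-(b+\sum_j\beta_j/\alpha_j)\neq0$, and $\pi=\langle u_1,v_1,\dots,u_g,v_g,q_1,\dots,q_n,h\mid\prod_i[u_i,v_i]\prod_jq_j=h^b,\ q_j^{\alpha_j}h^{\beta_j}=1,\ h\text{ central}\rangle$. $\mathcal R(\pi,\widetilde{\mathrm{SL}}_2)$ is the set of faithful homomorphisms $\pi\to\widetilde{\mathrm{SL}}_2$ with discrete cocompact image. *)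

From Stdlib Require Import Reals ZArith List.
Open Scope R_scope.

Record Group := {
  carrier :> Type;
  gmul : carrier -> carrier -> carrier;
  gone : carrier;
  ginv : carrier -> carrier;
  gmulA : forall x y z, gmul x (gmul y z) = gmul (gmul x y) z;
  gmul1l : forall x, gmul gone x = x;
  gmulVl : forall x, gmul (ginv x) x = gone
}.

Arguments gmul {_} _ _.
Arguments gone {_}.
Arguments ginv {_} _.

Fixpoint gpow_nat {G : Group} (x : G) (k : nat) : G :=
  match k with O => gone | S k' => gmul x (gpow_nat x k') end.

Definition gpow {G : Group} (x : G) (z : Z) : G :=
  match z with
  | Z0 => gone
  | Zpos p => gpow_nat x (Pos.to_nat p)
  | Zneg p => ginv (gpow_nat x (Pos.to_nat p))
  end.

Definition gcomm {G : Group} (u v : G) : G :=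
  gmul (gmul (gmul u v) (ginv u)) (ginv v).

Fixpoint gprod {G : Group} (k : nat) (x : nat -> G) : G :=
  match k with O => gone | S k' => gmul (gprod k' x) (x k') end.

Definition is_group_hom {G H : Group} (phi : G -> H) : Prop :=
  forall x y, phi (gmul x y) = gmul (phi x) (phi y).

(** The relations of the presentation of pi, evaluated on elements
    u_i, v_i (i < g), q_j (j < n), h of a group G.  (Indices 0-based.) *)
Definition seifert_relations (g n : nat) (b : Z) (alpha beta : nat -> Z)
    {G : Group} (u v q : nat -> G) (h : G) : Prop :=
  gmul (gprod g (fun i => gcomm (u i) (v i))) (gprod n q) = gpow h b /\
  (forall j, (j < n)%nat -> gmul (gpow (q j) (alpha j)) (gpow h (beta j)) = gone) /\
  (forall x : G, gmul h x = gmul x h).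

(** [P] with elements u,v,q,h is presented by the Seifert presentation:
    the relations hold, and for every group H and elements satisfying the
    relations there is a unique homomorphism P -> H mapping generators to them. *)
Definition seifert_presentation (g n : nat) (b : Z) (alpha beta : nat -> Z)
    (P : Group) (u v q : nat -> P) (h : P) : Prop :=
  seifert_relations g n b alpha beta u v q h /\
  forall (H : Group) (u' v' q' : nat -> H) (h' : H),
    seifert_relations g n b alpha beta u' v' q' h' ->
    (exists phi : P -> H, is_group_hom phi /\
       (forall i, (i < g)%nat -> phi (u i) = u' i /\ phi (v i) = v' i) /\
       (forall j, (j < n)%nat -> phi (q j) = q' j) /\ phi h = h') /\
    (forall phi1 phi2 : P -> H, is_group_hom phi1 -> is_group_hom phi2 ->
       (forall i, (i < g)%nat -> phi1 (u i) = phi2 (u i) /\ phi1 (v i) = phi2 (v i)) ->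
       (forall j, (j < n)%nat -> phi1 (q j) = phi2 (q j)) -> phi1 h = phi2 h ->
       forall x, phi1 x = phi2 x).

Definition normalised_seifert (n : nat) (alpha beta : nat -> Z) : Prop :=
  forall j, (j < n)%nat ->
    (0 < beta j < alpha j)%Z /\ Z.gcd (alpha j) (beta j) = 1%Z.

Fixpoint sum_upto (k : nat) (f : nat -> R) : R :=
  match k with O => 0 | S k' => sum_upto k' f + f k' end.

Definition euler_number (n : nat) (b : Z) (alpha beta : nat -> Z) : R :=
  - (IZR b + sum_upto n (fun j => IZR (beta j) / IZR (alpha j))).

(** * The universal cover of PSL_2(R)
    An element of SL_2(R) is a matrix (a b; c d) with ad - bc = 1; it acts
    on the circle of rays in R^2.  The universal cover of SL_2(R) (= that of
    PSL_2(R)) is realised as the group, under composition, of continuous maps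
    f : R -> R lifting the action of some g in SL_2(R) on rays, where the ray
    of angle t is spanned by (cos t, sin t). *)
Record SL2 := mkSL2 { sa : R; sb : R; sc : R; sd : R }.

Definition is_SL2 (m : SL2) : Prop := sa m * sd m - sb m * sc m = 1.

Definition SL2_opp (m : SL2) : SL2 := mkSL2 (- sa m) (- sb m) (- sc m) (- sd m).

Definition lifts (m : SL2) (f : R -> R) : Prop :=
  is_SL2 m /\ continuity f /\
  forall t, exists r, 0 < r /\
    sa m * cos t + sb m * sin t = r * cos (f t) /\
    sc m * cos t + sd m * sin t = r * sin (f t).

Definition in_SL2t (f : R -> R) : Prop := exists m, lifts m f.

(** pr o f = pr o f' in PSL_2(R) = SL_2(R)/{±1} *)
Definition pr_eq (f f' : R -> R) : Prop :=
  exists m, lifts m f /\ (lifts m f' \/ lifts (SL2_opp m) f').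

(** Topology on \widetilde{SL}_2: that induced by the embedding
    f |-> (m, f 0) into SL_2(R) x R (a homeomorphism onto a closed subset). *)
Definition SL2t_close (f f' : R -> R) (eps : R) : Prop :=
  exists m m', lifts m f /\ lifts m' f' /\
    Rabs (sa m - sa m') < eps /\ Rabs (sb m - sb m') < eps /\
    Rabs (sc m - sc m') < eps /\ Rabs (sd m - sd m') < eps /\
    Rabs (f 0 - f' 0) < eps.

Definition SL2t_bounded (f : R -> R) (C : R) : Prop :=
  exists m, lifts m f /\
    Rabs (sa m) <= C /\ Rabs (sb m) <= C /\ Rabs (sc m) <= C /\ Rabs (sd m) <= C /\
    Rabs (f 0) <= C.

Definition is_hom_SL2t {P : Group} (rho : P -> R -> R) : Prop :=
  (forall x, in_SL2t (rho x)) /\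
  (forall x y t, rho (gmul x y) t = rho x (rho y t)).

Definition faithful_SL2t {P : Group} (rho : P -> R -> R) : Prop :=
  forall x y, (forall t, rho x t = rho y t) -> x = y.

Definition discrete_image {P : Group} (rho : P -> R -> R) : Prop :=
  forall x, exists eps, 0 < eps /\
    forall y, SL2t_close (rho x) (rho y) eps -> forall t, rho y t = rho x t.

(** the image Gamma is cocompact: G = Gamma K for a compact K, i.e. (the image
    of the embedding being closed) for a bounded K *)
Definition cocompact_image {P : Group} (rho : P -> R -> R) : Prop :=
  exists C, forall f, in_SL2t f ->
    exists x k, in_SL2t k /\ SL2t_bounded k C /\ forall t, f t = rho x (k t).

Definition in_Rep {P : Group} (rho : P -> R -> R) : Prop :=
  is_hom_SL2t rho /\ faithful_SL2t rho /\ discrete_image rho /\ cocompact_image rho.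

From Stdlib Require Import Reals ZArith Lra Lia Psatz.
Open Scope R_scope.

(* Two lifts of the same element of PSL_2 differ, at every point, by an
   integer multiple of pi, and by continuity this multiple is constant.  A lift
   commutes with the translation by pi (the antipodal map on rays), so
   rho' x = rho x + c(x) pi defines a homomorphism c from pi to Z.  Every
   homomorphism c : pi -> R satisfies sum_j c(q_j) = b c(h) and
   alpha_j c(q_j) + beta_j c(h) = 0, hence e c(h) = 0; as e <> 0, c(h) = 0 and
   then c(q_j) = 0. *)

Lemma IVT_between (d : R -> R) x y w :
  continuity d -> x <= y -> (d x - w) * (d y - w) <= 0 ->
  exists z, x <= z <= y /\ d z = w.
Proof.
  intros Hd Hxy Hw.
  destruct (IVT_cor (fun s => d s - w) x y) as [z [Hz Ez]]; trivial.
  - apply continuity_minus; [exact Hd | now apply continuity_const].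
  - exists z; split; [exact Hz | lra].
Qed.

Lemma sin_sub_eq0_of_parallel r s x y :
  0 < r -> r * cos x = s * cos y -> r * sin x = s * sin y -> sin (x - y) = 0.
Proof.
  intros Hr Hc Hs. rewrite sin_minus.
  assert (E : r * (sin x * cos y - cos x * sin y) = 0).
  { replace (r * (sin x * cos y - cos x * sin y))
      with (r * sin x * cos y - r * cos x * sin y) by ring.
    rewrite Hc, Hs; ring. }
  apply Rmult_integral in E as [E | E]; lra.
Qed.

Lemma sin_eq0_continuous_const (d : R -> R) :
  continuity d -> (forall t, sin (d t) = 0) -> forall x y, x <= y -> d x = d y.
Proof.
  intros Hd Hsin x y Hxy.
  destruct (sin_eq_0_0 _ (Hsin x)) as [a Ha].
  destruct (sin_eq_0_0 _ (Hsin y)) as [b Hb].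
  destruct (Z.eq_dec a b) as [<- | Hab]; [congruence |].
  exfalso. pose proof PI_RGT_0.
  (* d would have to cross a half-odd multiple of pi, where sin does not vanish *)
  set (w := (IZR (Z.min a b) + / 2) * PI).
  destruct (IVT_between d x y w) as [z [_ Hz]]; trivial.
  - rewrite Ha, Hb; unfold w.
    destruct (Z.min_spec a b) as [[Hlt ->] | [Hle ->]].
    + assert (IZR a + 1 <= IZR b) by (rewrite <- plus_IZR; apply IZR_le; lia).
      nra.
    + assert (IZR b + 1 <= IZR a) by (rewrite <- plus_IZR; apply IZR_le; lia).
      nra.
  - destruct (sin_eq_0_0 _ (Hsin z)) as [k Hk].
    rewrite Hz in Hk; unfold w in Hk.
    assert (Hk' : IZR (2 * k) = IZR (2 * Z.min a b + 1)).
    { rewrite plus_IZR, !mult_IZR.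
      apply Rmult_eq_reg_r with PI; [lra | apply PI_neq0]. }
    apply eq_IZR in Hk'; lia.
Qed.

Section Lift.

Variables (m : SL2) (f : R -> R).
Hypothesis Hf : lifts m f.

Lemma lift_continuity : continuity f.
Proof. now destruct Hf as [_ [Hc _]]. Qed.

Lemma lift_sin_pos t s : t < s < t + PI -> 0 < sin (f s - f t).
Proof.
  intros Hts. destruct Hf as [Hdet [_ Hl]].
  destruct (Hl t) as [rt [Hrt [H1 H2]]]; destruct (Hl s) as [rs [Hrs [H3 H4]]].
  assert (Hsin : 0 < sin (s - t)) by (apply sin_gt_0; lra).
  (* the determinant of the images of two rays is det m times that of the rays *)
  assert (E : rt * rs * sin (f s - f t) = sin (s - t)).
  { rewrite !sin_minus. unfold is_SL2 in Hdet.
    transitivity ((sc m * cos s + sd m * sin s) * (sa m * cos t + sb m * sin t)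
      - (sa m * cos s + sb m * sin s) * (sc m * cos t + sd m * sin t)).
    - rewrite H1, H2, H3, H4; ring.
    - transitivity ((sa m * sd m - sb m * sc m) * (sin s * cos t - cos s * sin t));
        [ring | rewrite Hdet; ring]. }
  assert (0 < rt * rs) by nra. nra.
Qed.

Lemma lift_sin_add_PI_eq0 t : sin (f (t + PI) - f t) = 0.
Proof.
  destruct Hf as [_ [_ Hl]].
  destruct (Hl t) as [r [Hr [H1 H2]]]; destruct (Hl (t + PI)) as [r' [Hr' [H3 H4]]].
  rewrite neg_cos, neg_sin in H3, H4.
  apply (sin_sub_eq0_of_parallel r' (- r)); lra.
Qed.

Lemma lift_sin_nonneg t s : t <= s <= t + PI -> 0 <= sin (f s - f t).
Proof.
  intros Hts.
  destruct (Req_dec s t) as [-> | Hst].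
  { rewrite Rminus_diag, sin_0; lra. }
  destruct (Req_dec s (t + PI)) as [-> | Hspi].
  { rewrite lift_sin_add_PI_eq0; lra. }
  apply Rlt_le, lift_sin_pos; lra.
Qed.

Lemma lift_add_PI t : f (t + PI) = f t + PI.
Proof.
  destruct (sin_eq_0_0 _ (lift_sin_add_PI_eq0 t)) as [k Hk].
  pose proof PI_RGT_0.
  assert (Hcross : forall w, (0 - w) * (IZR k * PI - w) <= 0 -> sin w < 0 -> False).
  { intros w Hw Hsw.
    destruct (IVT_between (fun s => f s - f t) t (t + PI) w) as [z [Hz Ez]].
    - apply continuity_minus; [exact lift_continuity | now apply continuity_const].
    - lra.
    - rewrite Hk, Rminus_diag; exact Hw.
    - pose proof (lift_sin_nonneg t z Hz). simpl in Ez. rewrite Ez in *. lra. }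
  destruct (Z.lt_trichotomy k 1) as [Hlt | [-> | Hgt]].
  - destruct (Z.eq_dec k 0) as [-> | Hne].
    + exfalso. simpl in Hk.
      assert (A := lift_sin_pos t (t + PI / 2) ltac:(lra)).
      assert (B := lift_sin_pos (t + PI / 2) (t + PI) ltac:(lra)).
      replace (f (t + PI) - f (t + PI / 2)) with (- (f (t + PI / 2) - f t)) in B by lra.
      rewrite sin_neg in B; lra.
    + exfalso. apply (Hcross (- (PI / 2))).
      * assert (IZR k <= -1) by (apply IZR_le; lia). nra.
      * rewrite sin_neg, sin_PI2; lra.
  - simpl in Hk; lra.
  - exfalso. apply (Hcross (PI / 2 + PI)).
    + assert (2 <= IZR k) by (apply IZR_le; lia). nra.
    + rewrite neg_sin, sin_PI2; lra.
Qed.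

Lemma lift_add_IZR_PI k t : f (t + IZR k * PI) = f t + IZR k * PI.
Proof.
  revert t. induction k as [| k IHk | k IHk] using Z.peano_ind; intro t.
  - rewrite Rmult_0_l, !Rplus_0_r; reflexivity.
  - rewrite succ_IZR.
    replace (t + (IZR k + 1) * PI) with (t + IZR k * PI + PI) by ring.
    rewrite lift_add_PI, IHk; ring.
  - rewrite <- Z.sub_1_r, minus_IZR.
    pose proof (lift_add_PI (t + (IZR k - 1) * PI)) as E.
    replace (t + (IZR k - 1) * PI + PI) with (t + IZR k * PI) in E by ring.
    rewrite IHk in E; lra.
Qed.

End Lift.

Lemma lift_pr_eq_shift m f f' :
  lifts m f -> lifts m f' \/ lifts (SL2_opp m) f' ->
  exists k : Z, forall t, f' t = f t + IZR k * PI.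
Proof.
  intros Hf Hf'.
  assert (Hc' : continuity f') by (destruct Hf' as [H | H]; exact (lift_continuity _ _ H)).
  assert (Hsin : forall t, sin (f' t - f t) = 0).
  { intro t. destruct Hf as [_ [_ Hl]]. destruct (Hl t) as [r [Hr [H1 H2]]].
    destruct Hf' as [[_ [_ Hl']] | [_ [_ Hl']]];
      destruct (Hl' t) as [r' [Hr' [H3 H4]]]; simpl in H3, H4.
    - apply (sin_sub_eq0_of_parallel r' r); lra.
    - apply (sin_sub_eq0_of_parallel r' (- r)); lra. }
  set (d := fun t => f' t - f t).
  assert (Hd : continuity d) by exact (continuity_minus _ _ Hc' (lift_continuity _ _ Hf)).
  destruct (sin_eq_0_0 _ (Hsin 0)) as [k Hk].
  exists k; intro t.
  assert (E : d t = d 0).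
  { destruct (Rle_dec t 0).
    - now apply sin_eq0_continuous_const.
    - symmetry; apply sin_eq0_continuous_const; trivial; lra. }
  unfold d in E; lra.
Qed.

Lemma sum_upto_scal k (F w : nat -> R) (x : R) :
  (forall j, (j < k)%nat -> F j = x * w j) -> sum_upto k F = x * sum_upto k w.
Proof.
  induction k as [| k IHk]; intro HF; simpl; [ring |].
  rewrite IHk by (intros; apply HF; lia). rewrite HF by lia; ring.
Qed.

Section RealCharacter.

Variables (G : Group) (c : G -> R).
Hypothesis c_mul : forall x y, c (gmul x y) = c x + c y.

Lemma char_one : c gone = 0.
Proof. pose proof (c_mul gone gone) as E. rewrite gmul1l in E; lra. Qed.

Lemma char_inv x : c (ginv x) = - c x.
Proof. pose proof (c_mul (ginv x) x) as E. rewrite gmulVl, char_one in E; lra. Qed.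

Lemma char_pow_nat x k : c (gpow_nat x k) = INR k * c x.
Proof.
  induction k as [| k IHk]; simpl gpow_nat.
  - rewrite char_one; simpl; ring.
  - rewrite c_mul, IHk, S_INR; ring.
Qed.

Lemma char_pow x z : c (gpow x z) = IZR z * c x.
Proof.
  destruct z as [| p | p]; unfold gpow.
  - rewrite char_one; ring.
  - rewrite char_pow_nat, INR_IZR_INZ, positive_nat_Z; reflexivity.
  - rewrite char_inv, char_pow_nat, INR_IZR_INZ, positive_nat_Z, <- Pos2Z.opp_pos,
      opp_IZR; ring.
Qed.

Lemma char_gcomm x y : c (gcomm x y) = 0.
Proof. unfold gcomm. rewrite !c_mul, !char_inv; ring. Qed.

Lemma char_gprod k (x : nat -> G) : c (gprod k x) = sum_upto k (fun i => c (x i)).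
Proof. induction k as [| k IHk]; simpl; [exact char_one | rewrite c_mul, IHk; reflexivity]. Qed.

Lemma char_gprod_gcomm k (x y : nat -> G) : c (gprod k (fun i => gcomm (x i) (y i))) = 0.
Proof.
  rewrite char_gprod, (sum_upto_scal k _ (fun _ => 0) 0); [ring |].
  intros; rewrite char_gcomm; ring.
Qed.

Lemma char_seifert_trivial g n b alpha beta (u v q : nat -> G) (h : G) :
  normalised_seifert n alpha beta -> euler_number n b alpha beta <> 0 ->
  seifert_relations g n b alpha beta u v q h ->
  c h = 0 /\ forall j, (j < n)%nat -> c (q j) = 0.
Proof.
  intros Hnorm He [Hprod [Hfib _]].
  assert (Hq : forall j, (j < n)%nat ->
            c (q j) = - c h * (IZR (beta j) / IZR (alpha j))).
  { intros j Hj. pose proof (f_equal c (Hfib j Hj)) as E.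
    rewrite c_mul, !char_pow, char_one in E.
    assert (IZR (alpha j) <> 0) by (apply not_0_IZR; specialize (Hnorm j Hj); lia).
    field_simplify_eq; [lra | assumption]. }
  assert (Hh : c h * euler_number n b alpha beta = 0).
  { apply (f_equal c) in Hprod.
    rewrite c_mul, char_gprod_gcomm, char_gprod, char_pow, (sum_upto_scal n _ _ _ Hq)
      in Hprod.
    unfold euler_number; lra. }
  apply Rmult_integral in Hh as [Hh | Hh]; [| contradiction].
  split; [exact Hh |].
  intros j Hj; rewrite Hq, Hh by exact Hj; ring.
Qed.

End RealCharacter.

Section Shift.

Variables (P : Group) (rho rho' : P -> R -> R).
Hypotheses (Hrho : is_hom_SL2t rho) (Hrho' : is_hom_SL2t rho')
  (Hpr : forall x, pr_eq (rho x) (rho' x)).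

Definition shift (x : P) : R := (rho' x 0 - rho x 0) / PI.

Lemma shift_int x : exists k : Z, shift x = IZR k /\ forall t, rho' x t = rho x t + IZR k * PI.
Proof.
  destruct (Hpr x) as [m [Hm Hm']].
  destruct (lift_pr_eq_shift m _ _ Hm Hm') as [k Hk].
  exists k; split; [| exact Hk].
  unfold shift; rewrite Hk. field; apply PI_neq0.
Qed.

Lemma shift_spec x t : rho' x t = rho x t + shift x * PI.
Proof. destruct (shift_int x) as [k [-> Hk]]; apply Hk. Qed.

Lemma shift_mul x y : shift (gmul x y) = shift x + shift y.
Proof.
  destruct Hrho as [Hin Hmul]; destruct Hrho' as [_ Hmul'].
  destruct (Hin x) as [m Hm].
  destruct (shift_int y) as [k [Hky Hy]].
  pose proof (shift_spec (gmul x y) 0) as E.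
  rewrite Hmul', Hmul, shift_spec, Hy, (lift_add_IZR_PI m _ Hm), <- Hky in E.
  apply Rmult_eq_reg_r with PI; [lra | apply PI_neq0].
Qed.

End Shift.

Arguments shift {P} rho rho' x.

Theorem lemma4 (g n : nat) (b : Z) (alpha beta : nat -> Z)
  (P : Group) (u v q : nat -> P) (h : P)
  (Hnorm : normalised_seifert n alpha beta)
  (He : euler_number n b alpha beta <> 0)
  (Hpres : seifert_presentation g n b alpha beta P u v q h)
  (rho rho' : P -> R -> R)
  (Hrho : in_Rep rho) (Hrho' : in_Rep rho')
  (Hpr : forall x, pr_eq (rho x) (rho' x)) :
  (forall t, rho h t = rho' h t) /\
  (forall j, (j < n)%nat -> forall t, rho (q j) t = rho' (q j) t).
Proof.
  destruct Hrho as [Hhom _], Hrho' as [Hhom' _], Hpres as [Hrel _].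
  destruct (char_seifert_trivial P (shift rho rho') (shift_mul P rho rho' Hhom Hhom' Hpr)
              g n b alpha beta u v q h Hnorm He Hrel) as [Hh Hq].
  split.
  - intro t; rewrite (shift_spec P rho rho' Hpr), Hh; ring.
  - intros j Hj t; rewrite (shift_spec P rho rho' Hpr), Hq by exact Hj; ring.
Qed.
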